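(* Let $A$ be a real symmetric $n\times n$ matrix with symmetric tropical rank $r$, and let $\mathbf a_n$ denote its $n$th column. Define the $(n+1)\times(n+1)$ matrix $$A''=\begin{pmatrix}A&\mathbf a_n\\ \mathbf a_n^{T}&a_{n,n}\end{pmatrix},$$ obtained by duplicating the last column and then the last row. Then $A''$ is symmetric and has symmetric tropical rank $r$.
   Context: For an $r\times r$ submatrix of a real symmetric matrix $A$ with row index set $I$ and column index set $J$, each bijection $\rho:I\to J$ gives a monomial $\prod_{i\in I}X_{i,\rho(i)}$ in commuting variables subject to $X_{i,j}=X_{j,i}$, with value $\sum_{i\in I}A_{i,\rho(i)}$; the submatrix is symmetrically tropically singular if the minimum value is attained by at least two distinct monomials. The symmetric tropical rank of $A$ is the largest $r$ such that $A$ has an $r\times r$ submatrix (arbitrary row and column sets) that is not symmetrically tropically singular. *)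

From HB Require Import structures.
From mathcomp Require Import all_boot all_order all_algebra.
Set Implicit Arguments. Unset Strict Implicit. Unset Printing Implicit Defensive.
Import Order.TTheory GRing.Theory Num.Theory.
Local Open Scope ring_scope.

Section SymTrop.
Variables (R : realFieldType) (n : nat).
Implicit Types (A : 'M[R]_n) (I J : {set 'I_n}) (rho : {ffun 'I_n -> 'I_n}).

Definition is_bij I J rho : bool :=
  [forall x in I, forall y in I, (rho x == rho y) ==> (x == y)] &&
  (rho @: I == J).

Definition upair_eq (a b x y : 'I_n) : bool :=
  ((a == x) && (b == y)) || ((a == y) && (b == x)).

(* The monomial prod_{i in I} X_{i, rho i}, with X_{ij} = X_{ji}, encoded as
   its multiplicity function: (x,y) |-> number of i in I with {i, rho i} = {x,y}.
   Two monomials are equal iff these functions agree. *)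
Definition monomial I rho : {ffun 'I_n * 'I_n -> nat} :=
  [ffun p => #|[set i in I | upair_eq i (rho i) p.1 p.2]|].

Definition mon_value A I rho : R := \sum_(i in I) A i (rho i).

Definition sym_trop_singular A I J : bool :=
  [exists rho1, exists rho2,
    [&& is_bij I J rho1, is_bij I J rho2,
        monomial I rho1 != monomial I rho2,
        [forall rho, is_bij I J rho ==> (mon_value A I rho1 <= mon_value A I rho)]
      & [forall rho, is_bij I J rho ==> (mon_value A I rho2 <= mon_value A I rho)]]].

Definition sym_trop_rank A : nat :=
  \max_(I : {set 'I_n})
    \max_(J : {set 'I_n} | (#|J| == #|I|) && ~~ sym_trop_singular A I J) #|I|.

End SymTrop.

From mathcomp Require Import all_boot all_order all_algebra perm.
Import Order.TTheory GRing.Theory Num.Theory.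
Set Implicit Arguments. Unset Strict Implicit. Unset Printing Implicit Defensive.

(* Repeating rows and columns cannot raise the symmetric tropical rank: if
   C i j = B (f i) (f j), a square submatrix of C that meets a fibre of f twice
   has two equal rows (or columns), and composing a minimal bijection with the
   transposition of the two equal lines gives a second minimal bijection with a
   different monomial; a submatrix meeting each fibre at most once is a copy of
   a submatrix of B, with corresponding minimal monomials. A and A'' arise from
   each other in this way, so their ranks agree. *)

Section Bijections.
Variables (R : realFieldType) (p : nat).
Local Open Scope ring_scope.
Implicit Types (C : 'M[R]_p) (I J : {set 'I_p}) (rho : {ffun 'I_p -> 'I_p}).

Lemma is_bijP I J rho : reflect ({in I &, injective rho} /\ rho @: I = J) (is_bij I J rho).
Proof.
apply: (iffP andP) => [[/forall_inP inj /eqP <-] | [inj <-]]; split=> //.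
- move=> x y xI yI e.
  by apply/eqP; move/forall_inP/(_ y yI)/implyP: (inj x xI); apply; apply/eqP.
- by apply/forall_inP=> x xI; apply/forall_inP=> y yI; apply/implyP=> /eqP /inj ->.
Qed.

Lemma exists_is_bij I J : #|I| = #|J| -> exists rho, is_bij I J rho.
Proof.
move=> cardIJ.
pose rho : {ffun 'I_p -> 'I_p} := [ffun i => nth i (enum J) (index i (enum I))].
have index_lt x : x \in I -> (index x (enum I) < size (enum J))%N.
  by move=> xI; rewrite -cardE -cardIJ cardE index_mem mem_enum.
have inj : {in I &, injective rho}.
  move=> x y xI yI; rewrite !ffunE (set_nth_default y) ?index_lt //.
  move/eqP; rewrite nth_uniq ?index_lt ?enum_uniq // => /eqP eq_index.
  have xE : x \in enum I by rewrite mem_enum.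
  by rewrite -(nth_index x xE) eq_index nth_index ?mem_enum.
exists rho; apply/is_bijP; split=> //; apply/eqP.
rewrite eqEcard (card_in_imset inj) cardIJ leqnn andbT.
by apply/subsetP=> _ /imsetP[i iI ->]; rewrite ffunE -mem_enum mem_nth ?index_lt.
Qed.

Definition is_min_bij C I J rho :=
  is_bij I J rho /\ forall rho', is_bij I J rho' -> mon_value C I rho <= mon_value C I rho'.

Lemma exists_min_bij C I J : #|I| = #|J| -> exists rho, is_min_bij C I J rho.
Proof.
case/exists_is_bij=> rho0 bij0.
have [rho bij_rho min_rho] := arg_minP (mon_value C I) bij0.
by exists rho.
Qed.

Lemma sym_trop_singularP C I J :
  reflect (exists rho1 rho2, [/\ is_min_bij C I J rho1, is_min_bij C I J rho2
                               & monomial I rho1 != monomial I rho2])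
          (sym_trop_singular C I J).
Proof.
have minP rho : reflect (forall rho', is_bij I J rho' -> mon_value C I rho <= mon_value C I rho')
                        [forall rho', is_bij I J rho' ==> (mon_value C I rho <= mon_value C I rho')].
  by apply: (iffP forallP) => min_rho rho'; apply/implyP; apply: min_rho.
apply: (iffP existsP) => [[rho1 /existsP[rho2]] | [rho1 [rho2 [[b1 m1] [b2 m2] ne]]]].
  by case/and5P=> b1 b2 ne /(minP rho1) m1 /(minP rho2) m2; exists rho1, rho2.
exists rho1; apply/existsP; exists rho2.
by rewrite b1 b2 ne /=; apply/andP; split; [apply/(minP rho1) | apply/(minP rho2)].
Qed.

End Bijections.

Section Monomials.
Variable p : nat.
Implicit Types (I : {set 'I_p}) (rho : {ffun 'I_p -> 'I_p}) (Q : 'I_p -> 'I_p -> bool).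

Lemma monomialE I rho pr : monomial I rho pr = \sum_(i in I) upair_eq i (rho i) pr.1 pr.2.
Proof.
rewrite ffunE -sum1dep_card big_mkcondr /=.
by apply: eq_bigr=> i _; case: upair_eq.
Qed.

(* Each unordered pair {c, d} has exactly one representative (a, b) with a <= b. *)
Lemma sym_pred_sum_upair Q c d : (forall a b, Q a b = Q b a) ->
  Q c d = (\sum_(pr : 'I_p * 'I_p | pr.1 <= pr.2) Q pr.1 pr.2 * upair_eq c d pr.1 pr.2) :> nat.
Proof.
move=> Qsym; pose pr0 := if c <= d then (c, d) else (d, c).
have pr0_le : pr0.1 <= pr0.2 by rewrite /pr0; case: (leqP c d) => [|/ltnW].
rewrite (bigD1 pr0) //= big1 ?addn0 => [|[a b] /= /andP[le_ab ne_ab]].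
  have -> : upair_eq c d pr0.1 pr0.2 by rewrite /pr0 /upair_eq; case: ifP; rewrite !eqxx ?orbT.
  by rewrite muln1 /pr0; case: ifP; rewrite // Qsym.
case: (boolP (upair_eq c d a b)) => [|_]; last by rewrite muln0.
case/orP=> /andP[/eqP ca /eqP db]; subst a b; move: ne_ab; rewrite /pr0.
  by rewrite le_ab eqxx.
case: (leqP c d) => [le_cd | _]; last by rewrite eqxx.
have -> : c = d by apply/val_inj/eqP; rewrite eqn_leq le_cd le_ab.
by rewrite eqxx.
Qed.

Lemma sum_sym_pred_monomial I rho Q : (forall a b, Q a b = Q b a) ->
  \sum_(i in I) Q i (rho i) =
  \sum_(pr : 'I_p * 'I_p | pr.1 <= pr.2) Q pr.1 pr.2 * monomial I rho pr.
Proof.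
move=> Qsym; under [RHS]eq_bigr=> pr _ do rewrite monomialE big_distrr /=.
by rewrite exchange_big; apply: eq_bigr=> i _; apply: sym_pred_sum_upair.
Qed.

Lemma eq_monomial_sum I rho1 rho2 Q : (forall a b, Q a b = Q b a) ->
  monomial I rho1 = monomial I rho2 ->
  \sum_(i in I) Q i (rho1 i) = \sum_(i in I) Q i (rho2 i).
Proof. by move=> Qsym eq12; rewrite !sum_sym_pred_monomial // eq12. Qed.

End Monomials.

Section Transpositions.
Variables (R : realFieldType) (p : nat).
Implicit Types (C : 'M[R]_p) (I J : {set 'I_p}) (rho : {ffun 'I_p -> 'I_p}).

Definition swap rho (u v : 'I_p) : {ffun 'I_p -> 'I_p} := [ffun i => rho (tperm u v i)].

Lemma mem_tperm I u v i : u \in I -> v \in I -> (tperm u v i \in I) = (i \in I).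
Proof. by move=> uI vI; case: tpermP => [->|->|]; rewrite ?uI ?vI. Qed.

Lemma tperm_imset I u v : u \in I -> v \in I -> tperm u v @: I = I.
Proof.
move=> uI vI; apply/eqP; rewrite eqEcard card_imset ?leqnn ?andbT; last exact: perm_inj.
by apply/subsetP=> _ /imsetP[i iI ->]; rewrite mem_tperm.
Qed.

Lemma swap_is_bij I J rho u v :
  is_bij I J rho -> u \in I -> v \in I -> is_bij I J (swap rho u v).
Proof.
move=> /is_bijP[inj <-] uI vI; apply/is_bijP; split.
  move=> x y xI yI; rewrite !ffunE => /inj eq_t.
  by apply: (perm_inj (s := tperm u v)); apply: eq_t; rewrite mem_tperm.
rewrite -[in RHS](tperm_imset uI vI) -imset_comp.
by apply: eq_imset=> i; rewrite ffunE.
Qed.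

Lemma swap_mon_value_eq_rows C I rho u v : u \in I -> v \in I ->
  (forall j, C u j = C v j) -> mon_value C I (swap rho u v) = mon_value C I rho.
Proof.
move=> uI vI eq_rows; rewrite /mon_value (reindex_inj (@perm_inj _ (tperm u v))) /=.
apply: eq_big=> [i | i _]; first by rewrite mem_tperm.
by rewrite ffunE tpermK; case: tpermP=> [->|->|].
Qed.

Lemma swap_mon_value_eq_cols C I rho u v :
  (forall i, C i (rho u) = C i (rho v)) -> mon_value C I (swap rho u v) = mon_value C I rho.
Proof.
by move=> eq_cols; apply: eq_bigr=> i _; rewrite ffunE; case: tpermP=> [->|->|].
Qed.

(* The two bijections are told apart by the multiplicity of X_{u, rho u}. *)
Lemma swap_monomial_neq I J rho u v : is_bij I J rho -> u \in I -> v \in I -> u != v ->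
  monomial I (swap rho u v) != monomial I rho.
Proof.
move=> /is_bijP[inj _] uI vI neq_uv.
have neq_rho : rho u != rho v by apply: contra neq_uv => /eqP /inj ->.
suff : monomial I (swap rho u v) (u, rho u) < monomial I rho (u, rho u).
  by apply: contraTneq=> ->; rewrite ltnn.
rewrite !monomialE (bigD1 u uI) [X in _ < X](bigD1 u uI) /= ffunE tpermL.
have -> : upair_eq u (rho v) u (rho u) = false.
  rewrite /upair_eq eqxx /=; apply/negbTE/negP=> /orP[/eqP eq_rho | /andP[/eqP eq_u /eqP eq_v]].
    by rewrite eq_rho eqxx in neq_rho.
  by rewrite -eq_u eq_v eqxx in neq_rho.
rewrite /upair_eq !eqxx add1n ltnS; apply: leq_sum=> i /andP[_ neq_iu].
rewrite ffunE; case: tpermP=> [/eqP|->|_ _ //]; first by rewrite (negbTE neq_iu).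
rewrite [v == u]eq_sym (negbTE neq_uv) /=.
by case: (v =P rho u) => //= <-; rewrite eq_sym (negbTE neq_uv).
Qed.

End Transpositions.

Section EqualLines.
Variables (R : realFieldType) (p : nat).
Implicit Types (C : 'M[R]_p) (I J : {set 'I_p}) (rho : {ffun 'I_p -> 'I_p}).

Lemma sym_trop_singular_swap C I J rho u v : is_min_bij C I J rho ->
  u \in I -> v \in I -> u != v -> mon_value C I (swap rho u v) = mon_value C I rho ->
  sym_trop_singular C I J.
Proof.
move=> [bij_rho min_rho] uI vI neq_uv eq_val; apply/sym_trop_singularP.
exists rho, (swap rho u v); split=> //; last by rewrite eq_sym (swap_monomial_neq bij_rho).
by split=> [|rho' /min_rho]; rewrite ?eq_val ?swap_is_bij.
Qed.

Lemma sym_trop_singular_eq_rows C I J x y : #|I| = #|J| ->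
  x \in I -> y \in I -> x != y -> (forall j, C x j = C y j) -> sym_trop_singular C I J.
Proof.
move=> /(exists_min_bij C)[rho min_rho] xI yI neq_xy eq_rows.
by apply: (sym_trop_singular_swap min_rho xI yI neq_xy); apply: swap_mon_value_eq_rows.
Qed.

Lemma sym_trop_singular_eq_cols C I J x y : #|I| = #|J| ->
  x \in J -> y \in J -> x != y -> (forall i, C i x = C i y) -> sym_trop_singular C I J.
Proof.
move=> /(exists_min_bij C)[rho min_rho] xJ yJ; have [/is_bijP[_ imJ] _] := min_rho.
rewrite -imJ in xJ yJ; case/imsetP: xJ yJ => [u uI ->] /imsetP[v vI ->] neq_rho eq_cols.
have neq_uv : u != v by apply: contra neq_rho => /eqP ->.
by apply: (sym_trop_singular_swap min_rho uI vI neq_uv); apply: swap_mon_value_eq_cols.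
Qed.

End EqualLines.

Section Pullback.
Variables (R : realFieldType) (p q : nat) (f : 'I_p -> 'I_q) (B : 'M[R]_q).
Variables (I J : {set 'I_p}).
Hypotheses (injI : {in I &, injective f}) (injJ : {in J &, injective f}).

(* Values of [pull_bij s] outside I and of [push_bij rho] outside f @: I are junk. *)
Definition pull_bij (s : {ffun 'I_q -> 'I_q}) : {ffun 'I_p -> 'I_p} :=
  [ffun i => odflt i [pick j in J | f j == s (f i)]].

Definition push_bij (rho : {ffun 'I_p -> 'I_p}) : {ffun 'I_q -> 'I_q} :=
  [ffun y => odflt y (omap (fun i => f (rho i)) [pick i in I | f i == y])].

Lemma pull_bijE s : is_bij (f @: I) (f @: J) s ->
  forall i, i \in I -> pull_bij s i \in J /\ f (pull_bij s i) = s (f i).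
Proof.
move=> /is_bijP[_ imJ] i iI; rewrite ffunE; case: pickP=> [j /andP[jJ /eqP ->] | no_j] //.
have /imsetP[j jJ eq_j] : s (f i) \in f @: J by rewrite -imJ !imset_f.
by move: (no_j j); rewrite jJ eq_j eqxx.
Qed.

Lemma push_bijE rho i : i \in I -> push_bij rho (f i) = f (rho i).
Proof.
move=> iI; rewrite ffunE; case: pickP=> [k /andP[kI /eqP eq_k] | no_k] /=.
  by rewrite (injI kI iI eq_k).
by move: (no_k i); rewrite iI eqxx.
Qed.

Lemma pull_bij_is_bij s : is_bij (f @: I) (f @: J) s -> is_bij I J (pull_bij s).
Proof.
move=> bij_s; have E := pull_bijE bij_s; have /is_bijP[inj_s imJ] := bij_s.
apply/is_bijP; split.
  move=> x y xI yI eq_xy; apply: injI => //; apply: inj_s; rewrite ?imset_f //.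
  by rewrite -(E x xI).2 -(E y yI).2 eq_xy.
apply/eqP; rewrite eqEsubset; apply/andP; split; apply/subsetP.
  by move=> _ /imsetP[i iI ->]; apply: (E i iI).1.
move=> j jJ; have : f j \in s @: (f @: I) by rewrite imJ imset_f.
case/imsetP=> _ /imsetP[i iI ->] eq_j; apply/imsetP; exists i => //.
by apply: injJ; rewrite ?(E i iI).1 ?(E i iI).2.
Qed.

Lemma push_bij_is_bij rho : is_bij I J rho -> is_bij (f @: I) (f @: J) (push_bij rho).
Proof.
move=> /is_bijP[inj imJ]; apply/is_bijP; split.
  move=> _ _ /imsetP[x xI ->] /imsetP[y yI ->]; rewrite !push_bijE //.
  by move/injJ; rewrite -imJ !imset_f // => /(_ isT isT) /inj ->.
by rewrite -imJ -!imset_comp; apply: eq_in_imset=> i iI /=; apply: push_bijE.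
Qed.

Lemma mon_value_pull_bij s : is_bij (f @: I) (f @: J) s ->
  mon_value (mxsub f f B) I (pull_bij s) = mon_value B (f @: I) s.
Proof.
move=> bij_s; rewrite /mon_value big_imset //=; apply: eq_bigr=> i iI.
by rewrite mxE (pull_bijE bij_s iI).2.
Qed.

Lemma mon_value_push_bij rho : mon_value B (f @: I) (push_bij rho) = mon_value (mxsub f f B) I rho.
Proof. by rewrite /mon_value big_imset //=; apply: eq_bigr=> i iI; rewrite mxE push_bijE. Qed.

Lemma pull_bij_is_min s : is_min_bij B (f @: I) (f @: J) s ->
  is_min_bij (mxsub f f B) I J (pull_bij s).
Proof.
move=> [bij_s min_s]; split=> [|rho bij_rho]; first exact: pull_bij_is_bij.
by rewrite mon_value_pull_bij // -mon_value_push_bij min_s ?push_bij_is_bij.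
Qed.

Lemma eq_monomial_pull_bij s1 s2 :
  is_bij (f @: I) (f @: J) s1 -> is_bij (f @: I) (f @: J) s2 ->
  monomial I (pull_bij s1) = monomial I (pull_bij s2) -> monomial (f @: I) s1 = monomial (f @: I) s2.
Proof.
move=> bij1 bij2 eq_mon; apply/ffunP=> -[x y]; rewrite !monomialE /= !big_imset //=.
under eq_bigr=> i iI do rewrite -(pull_bijE bij1 iI).2.
under [RHS]eq_bigr=> i iI do rewrite -(pull_bijE bij2 iI).2.
apply: (eq_monomial_sum (Q := fun a b => upair_eq (f a) (f b) x y)) eq_mon => a b.
by rewrite /upair_eq orbC; congr (_ || _); apply: andbC.
Qed.

Lemma sym_trop_singular_mxsub :
  sym_trop_singular B (f @: I) (f @: J) -> sym_trop_singular (mxsub f f B) I J.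
Proof.
case/sym_trop_singularP=> s1 [s2 [min1 min2 neq_mon]]; apply/sym_trop_singularP.
exists (pull_bij s1), (pull_bij s2); split; try exact: pull_bij_is_min.
have [[bij1 _] [bij2 _]] := (min1, min2).
by apply: contraNneq neq_mon => /(eq_monomial_pull_bij bij1 bij2) ->.
Qed.

End Pullback.

Lemma sym_trop_rank_mxsub (R : realFieldType) (p q : nat) (f : 'I_p -> 'I_q) (B : 'M[R]_q) :
  (sym_trop_rank (mxsub f f B) <= sym_trop_rank B)%N.
Proof.
apply/bigmax_leqP=> I _; apply/bigmax_leqP=> J /andP[/eqP cardJI nonsing].
have injI : {in I &, injective f}.
  move=> x y xI yI eq_f; apply/eqP; apply: contraNT nonsing => neq_xy.
  by apply: (sym_trop_singular_eq_rows _ xI yI neq_xy) => // j; rewrite !mxE eq_f.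
have injJ : {in J &, injective f}.
  move=> x y xJ yJ eq_f; apply/eqP; apply: contraNT nonsing => neq_xy.
  by apply: (sym_trop_singular_eq_cols _ xJ yJ neq_xy) => // i; rewrite !mxE eq_f.
rewrite -(card_in_imset injI); apply: leq_trans (leq_bigmax (f @: I)).
apply: (leq_bigmax_cond (f @: J)); rewrite !card_in_imset // cardJI eqxx /=.
by apply: contra nonsing; apply: sym_trop_singular_mxsub.
Qed.

Local Open Scope ring_scope.

Theorem lemma6 (R : realFieldType) (n : nat) (A : 'M[R]_n.+1) (r : nat) :
  A^T = A ->
  sym_trop_rank A = r ->
  let A'' : 'M[R]_(n.+1 + 1) :=
    block_mx A (col ord_max A) (col ord_max A)^T (A ord_max ord_max)%:M in
  A''^T = A'' /\ sym_trop_rank A'' = r.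
Proof.
move=> symA <- A''; split; first by rewrite /A'' tr_block_mx symA trmxK tr_scalar_mx.
pose collapse (i : 'I_(n.+1 + 1)) := if split i is inl j then j else ord_max.
have A_sub : A = mxsub (lshift 1) (lshift 1) A''.
  by apply/matrixP=> i j; rewrite mxE block_mxEul.
have A''_sub : A'' = mxsub collapse collapse A.
  apply/matrixP=> i j; rewrite /A'' [RHS]mxE -(splitK i) -(splitK j) /collapse !unsplitK.
  case: (split i) => k; case: (split j) => l /=.
  - by rewrite block_mxEul.
  - by rewrite block_mxEur mxE.
  - by rewrite block_mxEdl !mxE -{1}symA mxE.
  - by rewrite block_mxEdr mxE !ord1 eqxx mulr1n.
apply/eqP; rewrite eqn_leq; apply/andP; split.
  by rewrite A''_sub sym_trop_rank_mxsub.
by rewrite {1}A_sub sym_trop_rank_mxsub.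
Qed.
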